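(* Let $R$ be the ring of integers of a nonarchimedean local field of characteristic not $2$ in which $2$ is a prime element, and let $\ell$ be an even $R$-lattice of rank $n\ge1$. If $J$ is an $R$-lattice such that $Q^\ast(\ell)\cap Q^\ast(J)\ne\varnothing$, then $\ell$ is primitively represented by $\mathbb{H}^{n-1}\perp J$.
   Context: An $R$-lattice is a finitely generated $R$-submodule of a quadratic space $(V,B)$ over $F$ with $Q(v)=B(v,v)$, assumed integral ($B(L,L)\subseteq R$) and nondegenerate; it is even if $Q(L)\subseteq 2R$. $Q^\ast(L)=\{Q(v): v\in L\text{ primitive}\}$, where $v$ is primitive if $Rv$ is a direct summand of $L$. A representation is an $R$-linear map preserving $B$, primitive if its image is a direct summand. $\mathbb{H}$ is the binary lattice with Gram matrix $\begin{pmatrix}0&1\\1&0\end{pmatrix}$ and $\mathbb{H}^{k}$ the orthogonal sum of $k$ copies ($\mathbb{H}^0=0$). *)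

From mathcomp Require Import all_boot all_order all_algebra.
Set Implicit Arguments. Unset Strict Implicit. Unset Printing Implicit Defensive.
Import Order.TTheory GRing.Theory Num.Theory.
Local Open Scope ring_scope.

Section Defs.
Variable F : fieldType.
Variable v : F -> int.

(* v is a normalized discrete valuation on F (only its values on nonzero
   elements matter; v 0 is irrelevant). *)
Definition is_dvaluation : Prop :=
  [/\ forall x y, x != 0 -> y != 0 -> v (x * y) = v x + v y,
      forall (x y : F) (k : int), x != 0 -> y != 0 -> x + y != 0 ->
        k <= v x -> k <= v y -> k <= v (x + y)
    & exists pi : F, pi != 0 /\ v pi = 1].

Definition vge (k : int) (x : F) : bool := (x == 0) || (k <= v x).

Definition inR (x : F) : bool := vge 0 x.

Definition complete : Prop :=
  forall u : nat -> F,
    (forall k : int, exists N : nat, forall p q, (N <= p)%N -> (N <= q)%N ->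
       vge k (u p - u q)) ->
    exists l : F, forall k : int, exists N : nat, forall p, (N <= p)%N ->
       vge k (u p - l).

Definition finite_residue : Prop :=
  exists s : seq F, all inR s /\
    forall x, inR x -> exists2 y, y \in s & vge 1 (x - y).

Definition local_field : Prop := [/\ is_dvaluation, complete & finite_residue].

Definition prime_elem (p : F) : Prop := p != 0 /\ v p = 1.

Definition mxR (a b : nat) (X : 'M[F]_(a, b)) : Prop := forall i j, inR (X i j).

Definition submodule (m : nat) (N : 'rV[F]_m -> Prop) : Prop :=
  [/\ forall t, N t -> mxR t, N 0,
      forall a b, N a -> N b -> N (a + b)
    & forall r a, inR r -> N a -> N (r *: a)].

Definition direct_summand (m : nat) (S : 'rV[F]_m -> Prop) : Prop :=
  exists N : 'rV[F]_m -> Prop, [/\ submodule N,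
    forall y, mxR y -> exists s t, [/\ S s, N t & y = s + t]
  & forall z, S z -> N z -> z = 0].

(* an R-lattice of rank k, given by its Gram matrix w.r.t. an R-basis:
   symmetric, integral and nondegenerate *)
Definition lattice (k : nat) (G : 'M[F]_k) : Prop :=
  [/\ G^T = G, mxR G & \det G != 0].

Definition Qf (k : nat) (G : 'M[F]_k) (x : 'rV[F]_k) : F := (x *m G *m x^T) 0 0.

Definition even (k : nat) (G : 'M[F]_k) : Prop :=
  forall x : 'rV[F]_k, mxR x -> inR (Qf G x / 2%:R).

Definition primitive_vec (k : nat) (x : 'rV[F]_k) : Prop :=
  [/\ mxR x, x != 0 & direct_summand (fun y => exists2 r, inR r & y = r *: x)].

Definition Qstar (k : nat) (G : 'M[F]_k) (q : F) : Prop :=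
  exists x : 'rV[F]_k, primitive_vec x /\ q = Qf G x.

(* X : R^a -> R^b (row vectors, x |-> x *m X) is a primitive representation of
   the lattice with Gram A by the lattice with Gram C *)
Definition prim_rep (a b : nat) (A : 'M[F]_a) (C : 'M[F]_b) (X : 'M[F]_(a, b)) : Prop :=
  [/\ mxR X, X *m C *m X^T = A
    & direct_summand (fun y => exists2 z : 'rV[F]_a, mxR z & y = z *m X)].

End Defs.

(* Gram matrix of H^k (orthogonal sum of k hyperbolic planes) *)
Definition hyp_gram (F : fieldType) (k : nat) : 'M[F]_(2 * k) :=
  \matrix_(i < 2 * k, j < 2 * k)
     (if (i./2 == j./2)%N && (i != j :> nat) then 1 else 0).

(* Choose primitive vectors x of l and y of J with Q(x) = Q(y). A primitive vector has a unit
   coordinate, so x extends to an R-basis x = u_0, u_1, ..., u_(n-1) of l, and y admits an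
   integral functional d with d(y) = 1. With hyperbolic pairs (e_i, f_i) spanning H^(n-1), map
     u_0 |-> y + sum_t B(u_0, u_(t+1)) f_t,      u_(i+1) |-> e_i + sum_t U_it f_t,
   where U is the strict upper triangle plus half the diagonal of the Gram matrix D of
   u_1, ..., u_(n-1); U is integral because l is even, and U + U^T = D makes the map an
   isometry. The functionals e_i^* and d give it an integral left inverse, so its image is a
   direct summand. *)

From mathcomp Require Import all_boot all_order all_algebra perm zify.
Set Implicit Arguments. Unset Strict Implicit. Unset Printing Implicit Defensive.
Import Order.TTheory GRing.Theory Num.Theory.
Local Open Scope ring_scope.

Section Hyperbolic.
Variable F : fieldType.

(* [hyp_gram] pairs the coordinates 2t and 2t+1, while [hyp_block] lists all the e_t before
   all the f_t; [interleave] converts the second indexing into the first. *)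
Definition hyp_block k : 'M[F]_(k + k) := block_mx 0 1%:M 1%:M 0.

Lemma interleave_subproof k (b : bool) (t : 'I_k) : (b + t.*2 < 2 * k)%N.
Proof. by have := ltn_ord t; case: b; lia. Qed.

Definition interleave k (i : 'I_(k + k)) : 'I_(2 * k) :=
  match split i with
  | inl t => Ordinal (interleave_subproof false t)
  | inr t => Ordinal (interleave_subproof true t)
  end.

Lemma interleave_lshift k (t : 'I_k) : interleave (lshift k t) = t.*2 :> nat.
Proof. by rewrite /interleave -[lshift k t]/(unsplit (inl t)) unsplitK. Qed.

Lemma interleave_rshift k (t : 'I_k) : interleave (rshift k t) = t.*2.+1 :> nat.
Proof. by rewrite /interleave -[rshift k t]/(unsplit (inr t)) unsplitK. Qed.

Lemma double_eq_doubleS m n : (m.*2 == n.*2.+1) = false.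
Proof. by apply/eqP => /(congr1 odd); rewrite /= !odd_double. Qed.

Lemma doubleS_eq_double m n : (m.*2.+1 == n.*2) = false.
Proof. by rewrite eq_sym double_eq_doubleS. Qed.

Lemma interleave_inj k : injective (@interleave k).
Proof.
move=> i j /(congr1 (@nat_of_ord _)) /eqP; apply: contraTeq.
case: (split_ordP i) => t ->; case: (split_ordP j) => u ->;
  rewrite ?interleave_lshift ?interleave_rshift ?eq_shift ?eqSS ?(can_eq doubleK)
    ?double_eq_doubleS ?doubleS_eq_double //.
Qed.

Lemma mxsub_interleave_hyp_gram k :
  mxsub (@interleave k) (@interleave k) (hyp_gram F k) = hyp_block k.
Proof.
apply/matrixP => i j; rewrite /hyp_block.
case: (split_ordP i) => t ->; case: (split_ordP j) => u ->;
  rewrite ?block_mxEul ?block_mxEur ?block_mxEdl ?block_mxEdr !mxE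
    ?interleave_lshift ?interleave_rshift /= ?doubleK ?uphalf_double ?eqSS ?(can_eq doubleK)
    ?double_eq_doubleS ?doubleS_eq_double ?andbN ?andbT ?val_eqE //;
  by case: (t == u).
Qed.

Lemma rowsub1_conj m n (f : 'I_m -> 'I_n) (M : 'M[F]_n) :
  rowsub f 1%:M *m M *m (rowsub f 1%:M)^T = mxsub f f M.
Proof.
rewrite mul_rowsub_mx mul1mx trmx_mxsub trmx1 mulmx_colsub mulmx1.
by apply/matrixP => i j; rewrite !mxE.
Qed.

Definition interleave_mx k : 'M[F]_(k + k, 2 * k) := rowsub (@interleave k) 1%:M.

Lemma interleave_mx_hyp_gram k :
  interleave_mx k *m hyp_gram F k *m (interleave_mx k)^T = hyp_block k.
Proof. by rewrite /interleave_mx rowsub1_conj mxsub_interleave_hyp_gram. Qed.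

Lemma interleave_mx_orthogonal k : interleave_mx k *m (interleave_mx k)^T = 1%:M.
Proof.
rewrite -[X in X *m _]mulmx1 /interleave_mx rowsub1_conj.
by apply/matrixP => i j; rewrite !mxE (inj_eq (@interleave_inj k)).
Qed.

Lemma hyp_block_form a b k m (p q : 'M[F]_(a, k)) (r : 'M[F]_(a, m))
    (p' q' : 'M[F]_(b, k)) (r' : 'M[F]_(b, m)) (C : 'M[F]_m) :
  row_mx (row_mx p q) r *m block_mx (hyp_block k) 0 0 C *m (row_mx (row_mx p' q') r')^T
  = q *m p'^T + p *m q'^T + r *m C *m r'^T.
Proof.
rewrite mul_row_block !mulmx0 addr0 add0r mul_row_block !mulmx0 !mulmx1 addr0 add0r.
by rewrite !tr_row_mx !mul_row_col.
Qed.

Lemma conj_block_diag a b m (T : 'M[F]_(a, b)) (G : 'M[F]_b) (C : 'M[F]_m) :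
  block_mx T 0 0 1%:M *m block_mx G 0 0 C *m (block_mx T 0 0 1%:M)^T
  = block_mx (T *m G *m T^T) 0 0 C.
Proof.
rewrite tr_block_mx !trmx0 trmx1 !mulmx_block.
by rewrite !(mulmx0, mul0mx, mulmx1, mul1mx, addr0, add0r).
Qed.

End Hyperbolic.

Section Gram.
Variable F : fieldType.

Definition upper_half n (D : 'M[F]_n) : 'M[F]_n :=
  \matrix_(i, j) if (i < j)%N then D i j else if i == j then D i i / 2%:R else 0.

Lemma upper_half_sym n (D : 'M[F]_n) :
  D^T = D -> (2%:R : F) != 0 -> upper_half D + (upper_half D)^T = D.
Proof.
move=> /matrixP Dsym two0; apply/matrixP => i j; rewrite !mxE.
case: (ltngtP i j) => [ij|ji|/val_inj ->]; rewrite ?eqxx.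
- by rewrite -val_eqE (gtn_eqF ij) addr0.
- by rewrite -val_eqE (gtn_eqF ji) add0r -[in RHS]Dsym mxE.
- by rewrite -mulrDl -mulr2n -[_ *+ 2]mulr_natr mulfK.
Qed.

Lemma ulsubmx_conj n k (P : 'M[F]_(1 + n, k)) (M : 'M[F]_k) :
  ulsubmx (P *m M *m P^T) = usubmx P *m M *m (usubmx P)^T.
Proof. by rewrite /ulsubmx -!mul_usub_mx -mulmx_lsub trmx_usub. Qed.

End Gram.

Section Valuation.
Variables (F : fieldType) (v : F -> int).
Hypothesis hv : is_dvaluation v.

Lemma valM x y : x != 0 -> y != 0 -> v (x * y) = v x + v y.
Proof. by case: hv => valM _ _; apply: valM. Qed.

Lemma val1 : v 1 = 0.
Proof. by have := @valM 1 1 (oner_neq0 _) (oner_neq0 _); rewrite mulr1; lia. Qed.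

Lemma valV x : x != 0 -> v x^-1 = - v x.
Proof. by move=> x0; have := valM x0 (invr_neq0 x0); rewrite divff // val1; lia. Qed.

Lemma valN x : x != 0 -> v (- x) = v x.
Proof.
have N1 : (-1 : F) != 0 by rewrite oppr_eq0 oner_neq0.
have vN1 : v (-1) = 0 by have := valM N1 N1; rewrite mulrNN mulr1 val1; lia.
by move=> x0; rewrite -mulN1r valM // vN1 add0r.
Qed.

Lemma vgeD k x y : vge v k x -> vge v k y -> vge v k (x + y).
Proof.
rewrite /vge; have [->|x0] := eqVneq x 0; first by rewrite add0r.
have [->|y0] := eqVneq y 0; first by rewrite addr0 /= => ->; rewrite orbT.
have [//|xy0 /= kx ky] := eqVneq (x + y) 0.
by case: hv => _ vgeD _; apply: vgeD.
Qed.

Lemma vgeN k x : vge v k x -> vge v k (- x).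
Proof. by rewrite /vge oppr_eq0; have [//|x0] := eqVneq x 0; rewrite valN. Qed.

Lemma vgeM k l x y : vge v k x -> vge v l y -> vge v (k + l) (x * y).
Proof.
rewrite /vge mulf_eq0; have [//|x0] := eqVneq x 0.
by have [//|y0 /= kx ly] := eqVneq y 0; rewrite valM // lerD.
Qed.

Lemma vge_le k l x : k <= l -> vge v l x -> vge v k x.
Proof. by rewrite /vge => kl /orP[->|/(le_trans kl)->]; rewrite ?orbT. Qed.

Lemma inR0 : inR v 0. Proof. by rewrite /inR /vge eqxx. Qed.
Lemma inR1 : inR v 1. Proof. by rewrite /inR /vge val1 lexx orbT. Qed.
Lemma inRD x y : inR v x -> inR v y -> inR v (x + y). Proof. exact: vgeD. Qed.
Lemma inRN x : inR v x -> inR v (- x). Proof. exact: vgeN. Qed.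
Lemma inRM x y : inR v x -> inR v y -> inR v (x * y).
Proof. by move=> xR yR; have := vgeM xR yR; rewrite addr0. Qed.

Lemma inR_nat k : inR v k%:R.
Proof. by elim: k => [|k IHk]; rewrite ?inR0 // mulrS inRD ?inR1. Qed.

Lemma inR_sum I (r : seq I) (P : pred I) (f : I -> F) :
  (forall i, P i -> inR v (f i)) -> inR v (\sum_(i <- r | P i) f i).
Proof. by move=> fR; apply: (big_ind (inR v)) => //; [apply: inR0 | apply: inRD]. Qed.

Definition unitR (x : F) : bool := [&& inR v x, x != 0 & inR v x^-1].

Lemma nonunitR_vge1 x : inR v x -> ~~ unitR x -> vge v 1 x.
Proof.
rewrite /unitR /inR /vge => ->; have [//|x0 /=] := eqVneq x 0.
by rewrite invr_eq0 (negPf x0) valV //; lia.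
Qed.

Lemma unitR_1B z : vge v 1 z -> unitR (1 - z).
Proof.
move=> z1; have u1 : ~~ vge v 1 (1 - z).
  apply: contraTN isT => h; have := vgeD h z1.
  by rewrite subrK /vge oner_eq0 val1.
have u0 : 1 - z != 0 by apply: contraNneq u1 => ->; rewrite /vge eqxx.
have uR : inR v (1 - z) by apply: inRD; [apply: inR1 | apply/inRN/(vge_le ler01 z1)].
move: uR u1; rewrite /unitR /inR /vge u0 invr_eq0 (negPf u0) /= valV //; lia.
Qed.

Lemma mxR0 a b : mxR v (0 : 'M[F]_(a, b)).
Proof. by move=> i j; rewrite mxE inR0. Qed.

Lemma mxR_scalar a r : inR v r -> mxR v (r%:M : 'M[F]_a).
Proof. by move=> rR i j; rewrite mxE; case: (i == j); rewrite ?mulr1n ?mulr0n ?inR0. Qed.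

Lemma mxR_add a b (M N : 'M[F]_(a, b)) : mxR v M -> mxR v N -> mxR v (M + N).
Proof. by move=> MR NR i j; rewrite mxE inRD. Qed.

Lemma mxR_opp a b (M : 'M[F]_(a, b)) : mxR v M -> mxR v (- M).
Proof. by move=> MR i j; rewrite mxE inRN. Qed.

Lemma mxR_scale a b r (M : 'M[F]_(a, b)) : inR v r -> mxR v M -> mxR v (r *: M).
Proof. by move=> rR MR i j; rewrite mxE inRM. Qed.

Lemma mxR_mul a b c (M : 'M[F]_(a, b)) (N : 'M[F]_(b, c)) :
  mxR v M -> mxR v N -> mxR v (M *m N).
Proof. by move=> MR NR i j; rewrite mxE inR_sum // => k _; rewrite inRM. Qed.

Lemma mxR_tr a b (M : 'M[F]_(a, b)) : mxR v M -> mxR v M^T.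
Proof. by move=> MR i j; rewrite mxE. Qed.

Lemma mxR_row_mx a b c (M : 'M[F]_(a, b)) (N : 'M[F]_(a, c)) :
  mxR v M -> mxR v N -> mxR v (row_mx M N).
Proof.
by move=> MR NR i j; rewrite -(splitK j); case: split => k; rewrite ?row_mxEl ?row_mxEr.
Qed.

Lemma mxR_col_mx a b c (M : 'M[F]_(a, c)) (N : 'M[F]_(b, c)) :
  mxR v M -> mxR v N -> mxR v (col_mx M N).
Proof.
by move=> MR NR i j; rewrite -(splitK i); case: split => k; rewrite ?col_mxEu ?col_mxEd.
Qed.

Lemma mxR_block_mx a1 a2 b1 b2 (Mul : 'M[F]_(a1, b1)) (Mur : 'M[F]_(a1, b2))
    (Mdl : 'M[F]_(a2, b1)) (Mdr : 'M[F]_(a2, b2)) :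
  mxR v Mul -> mxR v Mur -> mxR v Mdl -> mxR v Mdr -> mxR v (block_mx Mul Mur Mdl Mdr).
Proof. by move=> *; rewrite block_mxEv; apply: mxR_col_mx; apply: mxR_row_mx. Qed.

Lemma direct_summand_rinv a b (X : 'M[F]_(a, b)) (Y : 'M[F]_(b, a)) :
  mxR v X -> mxR v Y -> X *m Y = 1%:M ->
  direct_summand v (fun y => exists2 z : 'rV_a, mxR v z & y = z *m X).
Proof.
move=> XR YR XY; exists (fun w : 'rV_b => mxR v w /\ w *m Y = 0); split.
- split=> [w [] //||w w' [wR wY] [w'R w'Y]|r w rR [wR wY]].
  + by split; [apply: mxR0 | rewrite mul0mx].
  + by split; [apply: mxR_add | rewrite mulmxDl wY w'Y addr0].
  + by split; [apply: mxR_scale | rewrite -scalemxAl wY scaler0].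
- move=> y yR; exists (y *m Y *m X), (y - y *m Y *m X); split.
  + by exists (y *m Y); first apply: mxR_mul.
  + split; first by apply/mxR_add/mxR_opp/mxR_mul/XR/mxR_mul.
    by rewrite mulmxBl -!mulmxA XY mulmx1 subrr.
  + by rewrite addrC subrK.
- by move=> _ [z _ ->] [_]; rewrite -mulmxA XY mulmx1 => ->; rewrite mul0mx.
Qed.

Lemma primitive_vec_unit_coord k (x : 'rV[F]_k) :
  primitive_vec v x -> exists j, unitR (x 0 j).
Proof.
case=> xR x0 [N [[_ _ _ NZ] decomp disj]].
have [j|nonunit] := pickP (fun j => unitR (x 0 j)); first by exists j.
(* Otherwise x = pi x' with x' integral; splitting x' = r x + t along the complement N,
   t = (1 - r pi) x' is a unit multiple of x', so x = pi x' lies in N as well. *)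
case: hv => _ _ [pi [pi0 vpi]].
pose x' := pi^-1 *: x.
have xE : x = pi *: x' by rewrite scalerA divff // scale1r.
have x'R : mxR v x'.
  move=> i j; have := nonunitR_vge1 (xR i j); rewrite ord1 nonunit => /(_ isT).
  rewrite /inR /vge !mxE mulf_eq0 invr_eq0 (negPf pi0) /=.
  by have [//|xj0 /=] := eqVneq (x 0 j) 0; rewrite valM ?invr_eq0 // valV // vpi; lia.
have [_ [t [[r rR ->] Nt x'E]]] := decomp _ x'R.
have piR : vge v 1 pi by rewrite /vge vpi lexx orbT.
have /and3P[_ u0 uR] : unitR (1 - r * pi) by rewrite unitR_1B // -[1]add0r vgeM.
have tE : t = (1 - r * pi) *: x'.
  by rewrite scalerBl scale1r -scalerA -xE x'E addrAC subrr add0r.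
have Nx' : N x' by rewrite -[x']scale1r -(mulVf u0) -scalerA -tE; apply: NZ.
have Nx : N x by rewrite xE; apply: NZ; first exact: vge_le piR.
by case/eqP: x0; apply: disj Nx; exists 1; rewrite ?scale1r ?inR1.
Qed.

Lemma mxR_perm a (s : 'S_a) : mxR v (perm_mx s : 'M[F]_a).
Proof. by move=> i j; rewrite !mxE inR_nat. Qed.

Lemma basis_completion_pivot n (x : 'rV[F]_(1 + n)) :
  mxR v x -> unitR (x 0 (lshift n 0)) ->
  exists P Pi : 'M[F]_(1 + n), [/\ mxR v P, mxR v Pi, Pi *m P = 1%:M & usubmx P = x].
Proof.
set c := x 0 _ => xR /and3P[_ c0 cVR].
have xE : x = row_mx c%:M (rsubmx x).
  by rewrite -[in LHS](hsubmxK x) [lsubmx x]mx11_scalar mxE.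
exists (col_mx x (row_mx 0 1%:M)), (block_mx (c^-1)%:M (- c^-1 *: rsubmx x) 0 1%:M).
split; last by rewrite col_mxKu.
- by apply: mxR_col_mx => //; apply: mxR_row_mx; [apply: mxR0 | apply/mxR_scalar/inR1].
- apply: mxR_block_mx; [exact: mxR_scalar | | exact: mxR0 | exact/mxR_scalar/inR1].
  by apply: mxR_scale => [|i k]; rewrite ?mxE ?inRN.
rewrite [X in col_mx X _]xE -block_mxEv mulmx_block !mulmx0 !mul0mx !mulmx1 ?mul1mx.
by rewrite -scalar_mxM mulVf // mul_scalar_mx scaleNr !addr0 add0r addrN -scalar_mx_block.
Qed.

Lemma basis_completion n (x : 'rV[F]_(1 + n)) j :
  mxR v x -> unitR (x 0 j) ->
  exists P Pi : 'M[F]_(1 + n), [/\ mxR v P, mxR v Pi, Pi *m P = 1%:M & usubmx P = x].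
Proof.
move=> xR xj; pose s := tperm (lshift n 0) j.
have sxR : mxR v (col_perm s x) by rewrite col_permE; apply/mxR_mul/mxR_perm.
have [|P [Pi [PR PiR PiP PE]]] := basis_completion_pivot sxR; first by rewrite mxE tpermL.
exists (P *m perm_mx s), (perm_mx s^-1 *m Pi); split.
- exact/mxR_mul/mxR_perm.
- exact/mxR_mul/PiR/mxR_perm.
- by rewrite mulmxA -(mulmxA _ Pi) PiP mulmx1 -perm_mxM mulVg perm_mx1.
- by rewrite -mul_usub_mx PE col_permE -mulmxA -perm_mxM mulVg perm_mx1 mulmx1.
Qed.

Lemma primitive_vec_basis_completion n (x : 'rV[F]_(1 + n)) :
  primitive_vec v x ->
  exists P Pi : 'M[F]_(1 + n), [/\ mxR v P, mxR v Pi, Pi *m P = 1%:M & usubmx P = x].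
Proof.
move=> xprim; have [xR _ _] := xprim.
by have [j xj] := primitive_vec_unit_coord xprim; apply: basis_completion xj.
Qed.

Lemma primitive_vec_rinv k (y : 'rV[F]_k) :
  primitive_vec v y -> exists2 d : 'cV[F]_k, mxR v d & y *m d = 1%:M.
Proof.
move=> yprim; have [j /and3P[_ yj0 yjR]] := primitive_vec_unit_coord yprim.
exists ((y 0 j)^-1 *: delta_mx j 0); first by move=> i l; rewrite !mxE inRM ?inR_nat.
by apply/matrixP => i l; rewrite !ord1 -scalemxAr -colE !mxE eqxx mulVf.
Qed.

Definition split_rep a b (A : 'M[F]_a) (G : 'M[F]_b) (X : 'M[F]_(a, b)) : Prop :=
  [/\ mxR v X, X *m G *m X^T = A & exists2 Y : 'M[F]_(b, a), mxR v Y & X *m Y = 1%:M].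

Lemma split_rep_prim a b (A : 'M[F]_a) (G : 'M[F]_b) X :
  split_rep A G X -> prim_rep v A G X.
Proof. by case=> XR XGX [Y YR XY]; split=> //; apply: direct_summand_rinv XY. Qed.

Lemma split_rep_basis_change a b (P Pi : 'M[F]_a) (A : 'M[F]_a) (G : 'M[F]_b) X :
  mxR v P -> mxR v Pi -> Pi *m P = 1%:M ->
  split_rep (P *m A *m P^T) G X -> split_rep A G (Pi *m X).
Proof.
move=> PR PiR PiP [XR XGX [Y YR XY]]; split.
- exact: mxR_mul.
- have -> : Pi *m X *m G *m (Pi *m X)^T = Pi *m (X *m G *m X^T) *m Pi^T.
    by rewrite trmx_mul !mulmxA.
  by rewrite XGX !mulmxA PiP mul1mx -mulmxA -trmx_mul PiP trmx1 mulmx1.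
- exists (Y *m P); first exact: mxR_mul.
  by rewrite mulmxA -(mulmxA Pi) XY mulmx1.
Qed.

Lemma split_rep_gram_change a b c (A : 'M[F]_a) (G : 'M[F]_c) (T : 'M[F]_(b, c)) T' X :
  mxR v T -> mxR v T' -> T *m T' = 1%:M ->
  split_rep A (T *m G *m T^T) X -> split_rep A G (X *m T).
Proof.
move=> TR T'R TT' [XR XGX [Y YR XY]]; split.
- exact: mxR_mul.
- by rewrite trmx_mul !mulmxA -XGX !mulmxA.
- exists (T' *m Y); first exact: mxR_mul.
  by rewrite mulmxA -(mulmxA X) TT' mulmx1.
Qed.

Lemma even_conj a b (P : 'M[F]_(a, b)) (A : 'M[F]_b) :
  mxR v P -> even v A -> even v (P *m A *m P^T).
Proof.
by move=> PR Aev x xR; have := Aev _ (mxR_mul xR PR); rewrite /Qf trmx_mul !mulmxA.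
Qed.

Lemma even_diag a (A : 'M[F]_a) i : even v A -> inR v (A i i / 2%:R).
Proof.
move=> /(_ (delta_mx 0 i)); rewrite /Qf -rowE trmx_delta -colE !mxE.
by apply=> k l; rewrite mxE inR_nat.
Qed.

Lemma split_rep_hyp_block n m (A : 'M[F]_(1 + n)) (C : 'M[F]_m)
    (y : 'rV[F]_m) (d : 'cV[F]_m) :
  (2%:R : F) != 0 -> A^T = A -> mxR v A -> even v A ->
  mxR v y -> mxR v d -> y *m d = 1%:M -> y *m C *m y^T = ulsubmx A ->
  exists X, split_rep A (block_mx (hyp_block F n) 0 0 C) X.
Proof.
move=> two0 Asym AR Aev yR dR yd yCy.
have DR : mxR v (drsubmx A) by move=> i j; rewrite !mxE; apply: AR.
have bR : mxR v (ursubmx A) by move=> i j; rewrite !mxE; apply: AR.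
have UR : mxR v (upper_half (drsubmx A)).
  move=> i j; rewrite mxE; case: ifP => _ //; case: eqP => [->|_]; last exact: inR0.
  by rewrite !mxE; apply: even_diag.
exists (col_mx (row_mx (row_mx 0 (ursubmx A)) y)
               (row_mx (row_mx 1%:M (upper_half (drsubmx A))) 0)); split.
- apply: mxR_col_mx; apply: mxR_row_mx; do ?apply: mxR_row_mx;
    by [apply: mxR0 | apply/mxR_scalar/inR1 | ].
- rewrite mul_col_mx tr_col_mx mul_col_mx !mul_mx_row !hyp_block_form -block_mxEv.
  rewrite -[RHS]submxK; congr block_mx;
    rewrite ?trmx0 ?trmx1 ?(mulmx0, mul0mx, mulmx1, mul1mx, addr0, add0r) //.
    by rewrite trmx_ursub Asym.
  by rewrite upper_half_sym // trmx_drsub Asym.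
- exists (col_mx (col_mx (row_mx 0 1%:M) 0) (d *m row_mx 1%:M 0)).
    apply: mxR_col_mx; first (apply: mxR_col_mx; last exact: mxR0).
      by apply: mxR_row_mx; [apply: mxR0 | apply/mxR_scalar/inR1].
    by apply: mxR_mul => //; apply: mxR_row_mx; [apply/mxR_scalar/inR1 | apply: mxR0].
  rewrite mul_col_mx !mul_row_col !(mulmx0, mul0mx, mul1mx, addr0, add0r).
  by rewrite mulmxA yd mul1mx -block_mxEv -scalar_mx_block.
Qed.

Lemma split_rep_hyp_gram n m (A : 'M[F]_(1 + n)) (C : 'M[F]_m) X :
  split_rep A (block_mx (hyp_block F n) 0 0 C) X ->
  split_rep A (block_mx (hyp_gram F n) 0 0 C) (X *m block_mx (interleave_mx F n) 0 0 1%:M).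
Proof.
pose T := block_mx (interleave_mx F n) 0 0 (1%:M : 'M_m).
have TR : mxR v T.
  apply: mxR_block_mx; [|exact: mxR0|exact: mxR0|exact/mxR_scalar/inR1].
  by move=> i j; rewrite !mxE inR_nat.
have TT : T *m T^T = 1%:M.
  have := conj_block_diag (interleave_mx F n) 1%:M (1%:M : 'M_m).
  by rewrite -!scalar_mx_block !mulmx1 interleave_mx_orthogonal -scalar_mx_block.
rewrite -interleave_mx_hyp_gram -conj_block_diag.
exact: (split_rep_gram_change TR (mxR_tr TR) TT).
Qed.

End Valuation.

Theorem lemma6p6 (F : fieldType) (v : F -> int) (n m : nat)
    (A : 'M[F]_n) (C : 'M[F]_m) :
  local_field v -> (2%:R : F) != 0 -> prime_elem v 2%:R ->
  (1 <= n)%N -> lattice v A -> even v A -> lattice v C ->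
  (exists q : F, Qstar v A q /\ Qstar v C q) ->
  exists X : 'M[F]_(n, 2 * (n - 1) + m),
    prim_rep v A (block_mx (hyp_gram F (n - 1)) 0 0 C) X.
Proof.
move=> [hv _ _] two0 _ n_gt0 [Asym AR _] Aev _ [q [[x [xprim ->]] [y [yprim qE]]]].
case: n n_gt0 A Asym AR Aev x xprim qE => [//|n] _ A Asym AR Aev x xprim qE.
rewrite subn1 /=.
have [P [Pi [PR PiR PiP Px]]] := primitive_vec_basis_completion hv xprim.
have [d dR yd] := primitive_vec_rinv hv yprim.
have [yR _ _] := yprim.
have A'sym : (P *m A *m P^T)^T = P *m A *m P^T by rewrite !trmx_mul trmxK Asym mulmxA.
have A'R : mxR v (P *m A *m P^T) by apply/mxR_mul/mxR_tr/PR/mxR_mul.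
have yCy : y *m C *m y^T = ulsubmx (P *m A *m P^T).
  by rewrite ulsubmx_conj Px [LHS]mx11_scalar [RHS]mx11_scalar -/(Qf C y) -/(Qf A x) qE.
have [X Xrep] := split_rep_hyp_block hv two0 A'sym A'R (even_conj hv PR Aev) yR dR yd yCy.
exists (Pi *m (X *m block_mx (interleave_mx F n) 0 0 1%:M)).
exact/(split_rep_prim hv)/(split_rep_basis_change hv PR PiR PiP)/(split_rep_hyp_gram hv).
Qed.
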